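(* Let $Z_1,\ldots,Z_{n+1}$ be i.i.d. from an arbitrary distribution $\mathcal P$, let $V$ be a fixed score function and $\alpha\in(0,1)$. Let $\tilde\alpha=A(Z_1,\ldots,Z_n,X_{n+1})\in[0,1]$, where $A$ is a fixed deterministic rule (the same for every input, invariant under permutations of its first $n$ arguments) such that for every input, with $\bar v^*:=Q(\tilde\alpha;\hat{\mathcal F})$, $$v^*_{i1}:=Q\Big(\tilde\alpha;\sum_{j=1}^n p^H_{i,j}\delta_{V_j}+p^H_{i,n+1}\delta_{\bar v^*}\Big),\qquad v^*_{i2}:=Q\Big(\tilde\alpha;\sum_{j=1}^n p^H_{i,j}\delta_{V_j}+p^H_{i,n+1}\delta_{0}\Big),$$ either $\bar v^*=\infty$ or $$\text{(G2)}\qquad \frac{1}{n+1}\sum_{i=1}^n\mathbb 1\{V_i\le v^*_{i1}\}\ge\alpha\quad\text{and}\quad \frac{1}{n+1}\sum_{i=1}^n\mathbb 1\{V_i\le v^*_{i2}\}+\frac{1}{n+1}\ge\alpha.$$ Then $\mathbb P\{V_{n+1}\le Q(\tilde\alpha;\hat{\mathcal F})\}\ge\alpha$.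
   Context: Data: $Z_i=(X_i,Y_i)\in\mathbb R^p\times\mathbb R$, $i=1,\ldots,n+1$; $X=\{X_1,\ldots,X_{n+1}\}$ (unordered). A localizer is a function $H(x_1,x_2,X)\in[0,1]$ of $x_1,x_2\in\mathbb R^p$ and of the unordered set $X$, satisfying $H(x,x,X)=1$ for all $x$. Write $H_{i,j}=H(X_i,X_j,X)$ and $p^H_{i,j}=H_{i,j}/\sum_{k=1}^{n+1}H_{i,k}$. For a probability distribution $\mathcal F$ on $\mathbb R\cup\{\infty\}$ and $a\in[0,1]$, $Q(a;\mathcal F)=\inf\{t:\mathbb P_{T\sim\mathcal F}(T\le t)\ge a\}$; $\delta_v$ denotes the point mass at $v$. A fixed score function is a deterministic measurable $V:\mathbb R^p\times\mathbb R\to[0,\infty)$ not depending on the data; $V_i=V(Z_i)$. Define $\hat{\mathcal F}=\sum_{j=1}^{n}p^H_{n+1,j}\delta_{V_j}+p^H_{n+1,n+1}\delta_{\infty}$ (note that $\hat{\mathcal F}$, $\bar v^*$, $v^*_{i1}$, $v^*_{i2}$ do not depend on $Y_{n+1}$). *)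

From HB Require Import structures.
From mathcomp Require Import all_boot all_order all_algebra.
From mathcomp Require Import all_classical all_reals all_analysis.
Set Implicit Arguments. Unset Strict Implicit. Unset Printing Implicit Defensive.
Import Order.TTheory GRing.Theory Num.Theory.
Local Open Scope ring_scope.
Local Open Scope classical_set_scope.

Definition feat (R : realType) (p : nat) := (p.-tuple R)%type.
Definition dpt (R : realType) (p : nat) := (p.-tuple R * R)%type.

(* cdf at t of the discrete distribution sum_j w j * delta_(v j) on R u {oo} *)
Definition wcdf (R : realType) (m : nat) (w : 'I_m -> R) (v : 'I_m -> \bar R)
  (t : \bar R) : R := \sum_(j < m) (if (v j <= t)%E then w j else 0).

Definition quant (R : realType) (m : nat) (a : R) (w : 'I_m -> R)
  (v : 'I_m -> \bar R) : \bar R := ereal_inf [set t : \bar R | a <= wcdf w v t].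

Section ConformalDefs.
Variables (R : realType) (p n : nat).
Local Notation X := (feat R p).
Local Notation D := (dpt R p).

Definition is_localizer (H : X -> X -> (n.+1).-tuple X -> R) : Prop :=
  [/\ (forall x1 x2 t, 0 <= H x1 x2 t <= 1),
      (forall x t, H x x t = 1) &
      (forall x1 x2 (t t' : (n.+1).-tuple X), perm_eq t t' -> H x1 x2 t = H x1 x2 t')].

Definition is_symmetric_rule (A : n.-tuple D -> X -> R) : Prop :=
  (forall z x, 0 <= A z x <= 1) /\
  (forall (z z' : n.-tuple D) x, perm_eq z z' -> A z x = A z' x).

(* Data Z_1..Z_{n+1} are the entries of d; Z_{n+1} is at index ord_max. *)
Definition Xs (d : (n.+1).-tuple D) : (n.+1).-tuple X := map_tuple fst d.

Definition pH (H : X -> X -> (n.+1).-tuple X -> R) (d : (n.+1).-tuple D)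
  (i j : 'I_n.+1) : R :=
  H (tnth d i).1 (tnth d j).1 (Xs d) /
  \sum_(k < n.+1) H (tnth d i).1 (tnth d k).1 (Xs d).

Definition first_n (d : (n.+1).-tuple D) : n.-tuple D :=
  [tuple tnth d (widen_ord (leqnSn n) i) | i < n].

Definition atilde (A : n.-tuple D -> X -> R) (d : (n.+1).-tuple D) : R :=
  A (first_n d) (tnth d ord_max).1.

Definition Qi (H : X -> X -> (n.+1).-tuple X -> R) (V : D -> R) (a : R)
  (d : (n.+1).-tuple D) (i : 'I_n.+1) (c : \bar R) : \bar R :=
  quant a (pH H d i)
    (fun j => if j == ord_max then c else (V (tnth d j))%:E).

(* bar v* = Q(alpha~; F^) *)
Definition vbar H (A : n.-tuple D -> X -> R) V (d : (n.+1).-tuple D) : \bar R :=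
  Qi H V (atilde A d) d ord_max +oo%E.

Definition vstar1 H (A : n.-tuple D -> X -> R) V d (i : 'I_n.+1) : \bar R :=
  Qi H V (atilde A d) d i (vbar H A V d).

Definition vstar2 H (A : n.-tuple D -> X -> R) V d (i : 'I_n.+1) : \bar R :=
  Qi H V (atilde A d) d i 0%E.

Definition G2 (alpha : R) H (A : n.-tuple D -> X -> R) V (d : (n.+1).-tuple D)
  : Prop :=
  (alpha <= (n.+1)%:R^-1 *
     \sum_(i < n.+1 | i != ord_max) ((V (tnth d i))%:E <= vstar1 H A V d i)%E%:R)
  /\
  (alpha <= (n.+1)%:R^-1 *
     \sum_(i < n.+1 | i != ord_max) ((V (tnth d i))%:E <= vstar2 H A V d i)%E%:R
     + (n.+1)%:R^-1).

Definition iid {d0 : measure_display} {Omega : measurableType d0}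
  (P : probability Omega R) (Pz : probability D R)
  (Z : 'I_n.+1 -> Omega -> D) : Prop :=
  [/\ (forall i, measurable_fun setT (Z i)),
      (forall i (B : set D), measurable B -> P (Z i @^-1` B) = Pz B) &
      (forall B : 'I_n.+1 -> set D, (forall i, measurable (B i)) ->
         P (\bigcap_(i in [set: 'I_n.+1]) (Z i @^-1` B i))
         = (\prod_(i < n.+1) P (Z i @^-1` B i))%E)].

Definition data {T : Type} (Z : 'I_n.+1 -> T -> D) (w : T) : (n.+1).-tuple D :=
  [tuple Z i w | i < n.+1].

End ConformalDefs.

From HB Require Import structures.
From mathcomp Require Import all_boot all_order all_algebra.
From mathcomp Require Import all_classical all_reals all_analysis.
From mathcomp Require Import perm measurable_realfun.
Import Order.TTheory GRing.Theory Num.Theory.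
Local Open Scope ring_scope.
Local Open Scope classical_set_scope.
Set Implicit Arguments. Unset Strict Implicit.

(* Since the data are i.i.d., the n+1 events "after swapping the test point
   with point i, the test score is covered" are equiprobable, so it suffices
   that for every realisation at least alpha (n+1) of them occur.  Call j
   oracle-covered at level a when V_j lies below the a-quantile of all n+1
   true scores weighted by p^H_{j,.}.  Lowering one score (to vbar* or to 0)
   only lowers such quantiles, so (G2) for swap i yields alpha (n+1)
   oracle-covered points at level alpha~ of that swap: use its first half
   when i is not oracle-covered (then vbar* <= V_i), its second half
   otherwise.  Choosing i with the least alpha~ among the swaps with finite
   vbar*, each oracle-covered j is covered after swap j, whose level is
   larger or whose vbar* is infinite. *)

Section WeightedQuantile.
Variables (R : realType) (m : nat).
Implicit Types (a b : R) (w : 'I_m -> R) (v : 'I_m -> \bar R) (t x : \bar R).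

Lemma le_quantP a w v x :
  (x <= quant a w v)%E <-> (forall t, (t < x)%E -> wcdf w v t < a).
Proof.
split=> [xq t tx|h]; last first.
  apply: le_ereal_inf_tmp => y /= ay.
  by rewrite leNgt; apply/negP => /h; rewrite ltNge ay.
rewrite ltNge; apply/negP => at1.
have : (quant a w v <= t)%E by apply: ereal_inf_lbound.
by move=> /(le_trans xq); rewrite leNgt tx.
Qed.

Lemma le_quant_level a b w v : a <= b -> (quant a w v <= quant b w v)%E.
Proof. by move=> ab; apply: ereal_inf_le_tmp => t /= /(le_trans ab). Qed.

Lemma le_quant_wcdf a w v w' v' :
  (forall t, wcdf w v t <= wcdf w' v' t) -> (quant a w' v' <= quant a w v)%E.
Proof. by move=> le_cdf; apply: ereal_inf_le_tmp => t /= /le_trans; apply. Qed.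

Lemma wcdf_fwith_oo w v i t :
  (t < v i)%E -> wcdf w [eta v with i |-> +oo%E] t = wcdf w v t.
Proof.
move=> tvi; apply: eq_bigr => l _ /=; case: eqP => [->|//].
by rewrite [(+oo <= t)%E]leNgt (lt_le_trans tvi (leey _)) leNgt tvi.
Qed.

Lemma le_quant_fwith_oo a w v i :
  (v i <= quant a w [eta v with i |-> +oo%E])%E = (v i <= quant a w v)%E.
Proof.
apply/idP/idP => /le_quantP h; apply/le_quantP => t tvi; move: (h t tvi);
  by rewrite wcdf_fwith_oo.
Qed.

Lemma le_quant_fwith a w v i c :
  (forall l, 0 <= w l) -> (c <= v i)%E ->
  (quant a w [eta v with i |-> c] <= quant a w v)%E.
Proof.
move=> w_ge0 cvi; apply: le_quant_wcdf => t; apply: ler_sum => l _ /=.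
case: eqP => [->|//]; case: ifP => [/(le_trans cvi)->//|_].
by case: ifP => // _; apply: w_ge0.
Qed.

End WeightedQuantile.

Section SwapTestPoint.
Variables (R : realType) (p n : nat).
Local Notation D := (dpt R p).
Variables (H : feat R p -> feat R p -> (n.+1).-tuple (feat R p) -> R)
  (V : D -> R).
Hypothesis H_localizer : is_localizer H.

Definition swap_test (i : 'I_n.+1) (d : (n.+1).-tuple D) : (n.+1).-tuple D :=
  [tuple tnth d (tperm i ord_max j) | j < n.+1].

Definition scores (d : (n.+1).-tuple D) (l : 'I_n.+1) : \bar R :=
  (V (tnth d l))%:E.

Lemma tnth_swap_test i d j : tnth (swap_test i d) j = tnth d (tperm i ord_max j).
Proof. by rewrite tnth_mktuple. Qed.

Lemma perm_eq_Xs_swap_test i d : perm_eq (Xs (swap_test i d)) (Xs d).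
Proof.
apply/tuple_permP; exists (tperm i ord_max); congr val.
by apply: eq_from_tnth => j; rewrite !tnth_map.
Qed.

Lemma scores_swap_test i d j :
  scores (swap_test i d) j = scores d (tperm i ord_max j).
Proof. by rewrite /scores tnth_swap_test. Qed.

Lemma pH_ge0 d i j : 0 <= pH H d i j.
Proof.
have [H01 _ _] := H_localizer; have H0 x y := andP (H01 x y (Xs d)).
by rewrite divr_ge0 ?(H0 _ _).1 // sumr_ge0 // => k _; rewrite (H0 _ _).1.
Qed.

Lemma pH_swap_test i d x y :
  pH H (swap_test i d) x y = pH H d (tperm i ord_max x) (tperm i ord_max y).
Proof.
have [_ _ Hperm] := H_localizer; have HX := Hperm _ _ _ _ (perm_eq_Xs_swap_test i d).
rewrite /pH !tnth_swap_test !HX; congr (_ / _).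
rewrite [RHS](reindex_inj (@perm_inj _ (tperm i ord_max))) /=.
by apply: eq_bigr => k _; rewrite tnth_swap_test HX.
Qed.

Lemma wcdf_swap_test i d x c t :
  wcdf (pH H (swap_test i d) x)
    (fun j => if j == ord_max then c else scores (swap_test i d) j) t
  = wcdf (pH H d (tperm i ord_max x)) [eta scores d with i |-> c] t.
Proof.
rewrite /wcdf (reindex_inj (@perm_inj _ (tperm i ord_max))) /=.
apply: eq_bigr => l _; rewrite pH_swap_test tpermK scores_swap_test tpermK.
by rewrite (can2_eq (tpermK i ord_max) (tpermK i ord_max)) tpermR.
Qed.

Lemma Qi_swap_test a i d x c :
  Qi H V a (swap_test i d) x c
  = quant a (pH H d (tperm i ord_max x)) [eta scores d with i |-> c].
Proof. by congr ereal_inf; apply/funext => t; rewrite /= -wcdf_swap_test. Qed.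

Definition oracle_covers d (j : 'I_n.+1) (a : R) : bool :=
  (scores d j <= quant a (pH H d j) (scores d))%E.

Lemma oracle_covers_level d j a b :
  a <= b -> oracle_covers d j a -> oracle_covers d j b.
Proof. by move=> ab /le_trans; apply; apply: le_quant_level. Qed.

Lemma swap_test_covers a i d :
  (scores (swap_test i d) ord_max <= Qi H V a (swap_test i d) ord_max +oo%E)%E
  = oracle_covers d i a.
Proof.
by rewrite Qi_swap_test scores_swap_test tpermR le_quant_fwith_oo.
Qed.

Lemma swap_calib_covers a i d x c :
  (c <= scores d i)%E ->
  (scores (swap_test i d) x <= Qi H V a (swap_test i d) x c)%E ->
  oracle_covers d (tperm i ord_max x) a.
Proof.
rewrite Qi_swap_test scores_swap_test => ci /le_trans; apply.
exact/le_quant_fwith/ci/pH_ge0.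
Qed.

End SwapTestPoint.

Section CoverageCount.
Variables (R : realType) (p n : nat).
Local Notation D := (dpt R p).
Variables (H : feat R p -> feat R p -> (n.+1).-tuple (feat R p) -> R)
  (A : n.-tuple D -> feat R p -> R) (V : D -> R) (alpha : R).
Hypotheses (H_localizer : is_localizer H) (V_ge0 : forall z, 0 <= V z).

Lemma calib_count_le a i d c :
  (c <= scores V d i)%E ->
  \sum_(x < n.+1 | x != ord_max)
     (scores V (swap_test i d) x <= Qi H V a (swap_test i d) x c)%E%:R
  <= \sum_(j < n.+1 | j != i) (oracle_covers H V d j a)%:R :> R.
Proof.
move=> ci; rewrite (reindex_inj (@perm_inj _ (tperm i ord_max))) /=.
rewrite (eq_bigl (fun j => j != i)) => [|j]; last first.
  by rewrite (can2_eq (tpermK i ord_max) (tpermK i ord_max)) tpermR.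
apply: ler_sum => j _; case: (boolP (_ <= _)%E) => //.
by move=> /(swap_calib_covers H_localizer ci); rewrite tpermK => ->.
Qed.

Lemma G2_swap_test_count i d :
  G2 alpha H A V (swap_test i d) ->
  alpha * n.+1%:R
  <= \sum_(j < n.+1) (oracle_covers H V d j (atilde A (swap_test i d)))%:R.
Proof.
set a := atilde A _; rewrite (bigD1 i) //= => -[cover1 cover2].
rewrite -ler_pdivlMr ?ltr0n // mulrC.
have [covi|ncovi] := boolP (oracle_covers H V d i a).
- apply: le_trans cover2 _; rewrite mulrDr mulr1 addrC lerD2l ler_wpM2l //.
  by apply: (@calib_count_le a i d 0%E); rewrite lee_fin.
- have vbar_le : (vbar H A V (swap_test i d) <= scores V d i)%E.
    rewrite leNgt; apply: contra ncovi => /ltW.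
    by rewrite -(swap_test_covers V H_localizer) scores_swap_test tpermR.
  apply: le_trans cover1 _; rewrite add0r ler_wpM2l //.
  exact: calib_count_le vbar_le.
Qed.

Hypotheses (alpha_le1 : alpha <= 1)
  (G2_or_oo : forall d, vbar H A V d = +oo%E \/ G2 alpha H A V d).

Lemma swap_test_coverage_count d :
  alpha * n.+1%:R <= \sum_(i < n.+1)
    (scores V (swap_test i d) ord_max <= vbar H A V (swap_test i d))%E%:R.
Proof.
pose finite_vbar i := vbar H A V (swap_test i d) != +oo%E.
have [[i0 fin_i0]|all_oo] := pselect (exists i, finite_vbar i); last first.
  rewrite (eq_bigr (fun _ => 1)) => [|i _]; last first.
    have /negPn/eqP -> : ~~ finite_vbar i.
      by apply/negP => fin_i; apply: all_oo; exists i.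
    by rewrite leey.
  by rewrite sumr_const card_ord -[leRHS]mul1r ler_wpM2r.
have [m fin_m min_m] := arg_minP (fun i => atilde A (swap_test i d)) fin_i0.
have G2_m : G2 alpha H A V (swap_test m d).
  case: (G2_or_oo (swap_test m d)) => // vbar_oo.
  by move: fin_m; rewrite /finite_vbar vbar_oo.
apply: le_trans (G2_swap_test_count G2_m) _; apply: ler_sum => j _.
case: (boolP (oracle_covers _ _ _ _ _)) => // cov_j.
have [->|fin_j] := eqVneq (vbar H A V (swap_test j d)) +oo%E; first by rewrite leey.
have cov_j' := oracle_covers_level (min_m j fin_j) cov_j.
by rewrite /vbar (swap_test_covers V H_localizer) cov_j'.
Qed.

End CoverageCount.

Section TupleRectangles.
Variables (d : measure_display) (T : measurableType d) (m : nat).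

Definition tuple_rect (B : 'I_m -> set T) : set (m.-tuple T) :=
  [set t | forall i, B i (tnth t i)].

Definition tuple_rects : set (set (m.-tuple T)) :=
  [set X | exists2 B, (forall i, measurable (B i)) & X = tuple_rect B].

Lemma measurable_tuple_rects : @measurable _ (m.-tuple T) = <<s tuple_rects >>.
Proof.
rewrite eqEsubset; split.
  apply: smallest_sub; first exact: smallest_sigma_algebra.
  apply: (big_ind (fun S => S `<=` <<s tuple_rects >>)) => //.
    by move=> X Y XG YG; rewrite subUset.
  move=> i _ X [Ai mAi <-{X}]; apply: sub_sigma_algebra.
  exists (fun j => if j == i then Ai else setT) => [j|]; first by case: ifP.
  apply/seteqP; split => t /=; last by move=> /(_ i); rewrite eqxx.
  by move=> [_ Ait] j; case: eqP => [->|].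
apply: smallest_sub; first exact: sigma_algebra_measurable.
move=> X [B mB ->].
have -> : tuple_rect B = \bigcap_(i in [set: 'I_m]) ((tnth (T:=T))^~ i @^-1` B i).
  by apply/seteqP; split => t /= Bt i; [move=> _|]; apply: Bt.
apply: fin_bigcap_measurable; first exact: finite_finset.
by move=> i _; rewrite -[X in measurable X]setTI; apply: measurable_tnth.
Qed.

Lemma setI_closed_tuple_rects : setI_closed tuple_rects.
Proof.
move=> X Y [B mB ->] [C mC ->]; exists (fun i => B i `&` C i).
  by move=> i; apply: measurableI.
apply/seteqP; split => t /=; first by move=> [Bt Ct] i.
by move=> BCt; split => i; case: (BCt i).
Qed.

End TupleRectangles.

Section IidExchangeable.
Variables (R : realType) (p n : nat).
Variables (d0 : measure_display) (Omega : measurableType d0).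
Variables (P : probability Omega R) (Pz : probability (dpt R p) R).
Local Notation D := (dpt R p).

Lemma measurable_data (Z : 'I_n.+1 -> Omega -> D) :
  (forall i, measurable_fun setT (Z i)) -> measurable_fun setT (data Z).
Proof.
move=> mZ; apply/measurable_fun_tnthP => i.
by rewrite (_ : _ \o _ = Z i) //; apply/funext => w /=; rewrite tnth_mktuple.
Qed.

Lemma iid_perm (Z : 'I_n.+1 -> Omega -> D) (s : 'S_n.+1) :
  iid P Pz Z -> iid P Pz (Z \o s).
Proof.
move=> [mZ lawZ prodZ]; split => [i|i B|B mB]; [exact: mZ|exact: lawZ|].
have -> : \bigcap_(i in [set: 'I_n.+1]) ((Z \o s) i @^-1` B i)
       = \bigcap_(i in [set: 'I_n.+1]) (Z i @^-1` B (s^-1%g i)).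
  apply/seteqP; split => w /= Bw i _; last by have := Bw (s i) I; rewrite permK.
  by have := Bw (s^-1%g i) I; rewrite permKV.
rewrite prodZ // (reindex_inj (@perm_inj _ s)) /=.
by apply: eq_bigr => i _; rewrite permK.
Qed.

Lemma iid_data_rect (Z : 'I_n.+1 -> Omega -> D) (B : 'I_n.+1 -> set D) :
  iid P Pz Z -> (forall i, measurable (B i)) ->
  P (data Z @^-1` tuple_rect B) = (\prod_(i < n.+1) Pz (B i))%E.
Proof.
move=> [_ lawZ prodZ] mB.
have -> : data Z @^-1` tuple_rect B = \bigcap_(i in [set: 'I_n.+1]) (Z i @^-1` B i).
  apply/seteqP; split => w /= Bw i; last by rewrite tnth_mktuple; apply: Bw.
  by move=> _; have := Bw i; rewrite tnth_mktuple.
by rewrite prodZ //; apply: eq_bigr => i _; rewrite lawZ.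
Qed.

Lemma iid_data_law (Z Z' : 'I_n.+1 -> Omega -> D) (S : set ((n.+1).-tuple D)) :
  iid P Pz Z -> iid P Pz Z' -> measurable S ->
  P (data Z @^-1` S) = P (data Z' @^-1` S).
Proof.
move=> iidZ iidZ'; rewrite (measurable_tuple_rects D n.+1).
have mpre Y (f : Omega -> (n.+1).-tuple D) : measurable_fun setT f ->
    measurable Y -> measurable (f @^-1` Y).
  by move=> mf mY; rewrite -[X in measurable X]setTI; apply: mf.
have [[mZ _ _] [mZ' _ _]] := (iidZ, iidZ').
have [mdZ mdZ'] := (measurable_data mZ, measurable_data mZ').
move: S; apply: (dynkin_induction (measurable_tuple_rects D n.+1)).
- by apply: setI_closed_tuple_rects.
- by rewrite !preimage_setT.
- by move=> _ [B mB ->]; rewrite !iid_data_rect.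
- move=> Y mY eqY.
  by rewrite -!preimage_setC !probability_setC ?eqY //; apply: mpre.
- move=> F mF tF eqF; rewrite !preimage_bigcup.
  have tr (f : Omega -> (n.+1).-tuple D) : trivIset setT (fun k => f @^-1` F k).
    apply/trivIsetP => i j _ _ ij; rewrite -preimage_setI.
    by move/trivIsetP : tF => /(_ _ _ I I ij) ->; rewrite preimage_set0.
  rewrite !measure_bigcup //; first by apply: eq_eseriesr => i _; apply: eqF.
  all: by move=> i _; apply: mpre.
Qed.

End IidExchangeable.

Section CountingBound.
Variables (d : measure_display) (T : measurableType d) (R : realType).
Variables (P : probability T R) (m : nat) (E : 'I_m.+1 -> set T).
Hypothesis mE : forall i, measurable (E i).

Lemma le_sum_prob_count (c : R) : 0 <= c ->
  (forall w, c <= \sum_(i < m.+1) \1_(E i) w) ->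
  (c%:E <= \sum_(i < m.+1) P (E i))%E.
Proof.
move=> c_ge0 count_ge.
have -> : (\sum_(i < m.+1) P (E i) = \int[P]_w (\sum_(i < m.+1) (\1_(E i) w)%:E))%E.
  rewrite ge0_integral_sum //.
    by apply: eq_bigr => i _; rewrite integral_indic // setIT.
  by move=> i; apply/measurable_EFinP/measurable_indic.
rewrite -[c%:E]mule1 -(probability_setT P) -integral_cst //.
apply: ge0_le_integral => //.
- by apply: emeasurable_sum => i; apply/measurable_EFinP/measurable_indic.
- by move=> w _; rewrite /= sumEFin lee_fin.
Qed.

Lemma prob_ge_of_exchangeable_count (F : set T) (alpha : R) :
  (forall i, P (E i) = P F) -> 0 <= alpha ->
  (forall w, alpha * m.+1%:R <= \sum_(i < m.+1) \1_(E i) w) ->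
  (alpha%:E <= P F)%E.
Proof.
move=> PE alpha_ge0 /(le_sum_prob_count (mulr_ge0 alpha_ge0 (ler0n _ _))).
have PF_fin : P F \is a fin_num by rewrite -(PE ord0) fin_num_measure.
rewrite (eq_bigr (fun=> P F)) // -(fineK PF_fin) sumEFin sumr_const card_ord.
by rewrite !lee_fin -[fine _ *+ _]mulr_natr ler_pM2r ?ltr0n.
Qed.

End CountingBound.

Theorem theorem1 (R : realType) (p n : nat)
  (d0 : measure_display) (Omega : measurableType d0)
  (P : probability Omega R) (Pz : probability (dpt R p) R)
  (Z : 'I_n.+1 -> Omega -> dpt R p)
  (V : dpt R p -> R)
  (H : feat R p -> feat R p -> (n.+1).-tuple (feat R p) -> R)
  (A : n.-tuple (dpt R p) -> feat R p -> R)
  (alpha : R) :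
  iid P Pz Z ->
  measurable_fun setT V ->
  (forall v, 0 <= V v) ->
  is_localizer H ->
  is_symmetric_rule A ->
  0 < alpha < 1 ->
  (forall d : (n.+1).-tuple (dpt R p),
     vbar H A V d = +oo%E \/ G2 alpha H A V d) ->
  (* regularity: the coverage event is an event of the data space *)
  measurable [set d : (n.+1).-tuple (dpt R p) |
               ((V (tnth d ord_max))%:E <= vbar H A V d)%E] ->
  (alpha%:E <= P [set w | ((V (Z ord_max w))%:E <= vbar H A V (data Z w))%E])%E.
Proof.
move=> iidZ _ V_ge0 H_loc _ /andP[alpha_gt0 alpha_lt1] G2_or_oo mC.
set C := [set d | _] in mC *.
pose E i := data (Z \o tperm i ord_max) @^-1` C.
have data_swap i w : data (Z \o tperm i ord_max) w = swap_test i (data Z w).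
  by apply: eq_from_tnth => j; rewrite !tnth_mktuple.
have -> : [set w | ((V (Z ord_max w))%:E <= vbar H A V (data Z w))%E]
          = data Z @^-1` C.
  by apply/seteqP; split => w; rewrite /C /= tnth_mktuple.
apply: (@prob_ge_of_exchangeable_count _ _ _ P n E) (ltW alpha_gt0) _ => [i|i|w].
- have [mZs _ _] := iid_perm (tperm i ord_max) iidZ.
  by rewrite -[X in measurable X]setTI; apply: measurable_data.
- exact: iid_data_law (iid_perm _ iidZ) iidZ mC.
- have := swap_test_coverage_count H_loc V_ge0 (ltW alpha_lt1) G2_or_oo (data Z w).
  move/le_trans; apply; apply: ler_sum => i _; rewrite indicE.
  by case: (boolP (_ <= _)%E) => // covered; rewrite mem_set // /E /C /= data_swap.
Qed.
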